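(* Let $\mathcal{L}$ be a language on the alphabet $\{a,b\}$ and let ${\rm S}:\mathcal{L}\to\mathbb{N}_0\times\mathbb{N}_0$ be a homomorphism. If $\{{\rm S}(a),{\rm S}(b)\}\neq\{(0,1),(1,0)\}$, then $(\mathbb{N}_0\times\mathbb{N}_0)\setminus{\rm S}(\mathcal{L})$ is infinite.
   Context: $\mathbb{N}_0=\{0,1,2,\dots\}$. A language on $\{a,b\}$ is a set of nonempty finite words over $\{a,b\}$ closed under concatenation (a sub-semigroup of the free semigroup on $\{a,b\}$). A homomorphism ${\rm S}:\mathcal{L}\to\mathbb{N}_0\times\mathbb{N}_0$ is a map with ${\rm S}(w_1\cdots w_n)={\rm S}(w_1)+\cdots+{\rm S}(w_n)$ (coordinatewise addition), determined by the vectors ${\rm S}(a),{\rm S}(b)$. *)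

From mathcomp Require Import all_boot.
Set Implicit Arguments. Unset Strict Implicit. Unset Printing Implicit Defensive.

Inductive letter : Type := La | Lb.

Definition word := seq letter.

Definition language (L : word -> Prop) : Prop :=
  (forall w, L w -> w <> [::]) /\
  (forall u v, L u -> L v -> L (u ++ v)).

Definition addp (p q : nat * nat) : nat * nat := (p.1 + q.1, p.2 + q.2).

Definition Shom (Sa Sb : nat * nat) (w : word) : nat * nat :=
  foldr (fun x acc => addp (if x is La then Sa else Sb) acc) (0, 0) w.

Definition image_S (L : word -> Prop) (Sa Sb : nat * nat) (p : nat * nat) : Prop :=
  exists w, L w /\ Shom Sa Sb w = p.

Definition finite_set (A : nat * nat -> Prop) : Prop :=
  exists s : seq (nat * nat), forall p, A p -> p \in s.

From mathcomp Require Import all_boot zify.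

(** Whatever L is, S(L) lies in the set of nonnegative integer
    combinations of u = S(a) and v = S(b), so it suffices that this set
    misses points arbitrarily far out.  If it contained (1, k), (1, k + 1),
    (k, 1) and (k + 1, 1) for some k exceeding all coordinates of u and v,
    then one generator would be (1, _) and the other (0, d) with d dividing
    two consecutive integers, i.e. d = 1; the same on the other axis forces
    {u, v} = {(1,0), (0,1)}. *)

Definition nat_span (u v p : nat * nat) : Prop :=
  exists m n, p.1 = m * u.1 + n * v.1 /\ p.2 = m * u.2 + n * v.2.

Lemma Shom_nat_span u v w : nat_span u v (Shom u v w).
Proof.
elim: w => [|x w [m [n [E1 E2]]]]; first by exists 0, 0.
by case: x; [exists m.+1, n | exists m, n.+1]; rewrite /= E1 E2; lia.
Qed.

Lemma nat_span_sym {u v p} : nat_span u v p -> nat_span v u p.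
Proof. by move=> [m [n [E1 E2]]]; exists n, m; lia. Qed.

Lemma nat_span_swap {u v p} :
  nat_span u v p -> nat_span (swap_pair u) (swap_pair v) (swap_pair p).
Proof. by move=> [m [n [E1 E2]]]; exists m, n. Qed.

Lemma nat_span_unit_first {u v k} :
  nat_span u v (1, k) -> u.1 = 1 \/ v.1 = 1.
Proof.
move=> [m [n [/= E1 _]]].
have [mu1|nv1] : m * u.1 = 1 \/ n * v.1 = 1 by lia.
- by left; move/eqP: mu1; rewrite muln_eq1 => /andP[_ /eqP].
- by right; move/eqP: nv1; rewrite muln_eq1 => /andP[_ /eqP].
Qed.

Lemma nat_span_column_dvd {u v k} :
  u.1 = 1 -> u.2 < k -> v.2 < k -> nat_span u v (1, k) ->
  v.1 = 0 /\ v.2 %| k - u.2.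
Proof.
case: u v => u1 u2 [v1 v2] /= -> lt_u2k lt_v2k [m [n [/= E1 E2]]].
have m1 : m = 1.
  have [m0|] := posnP m; last by lia.
  move: E1 E2; rewrite m0 !mul0n !add0n => /esym/eqP.
  by rewrite muln_eq1 => /andP[/eqP -> _]; lia.
have n_gt0 : 0 < n by case: n E2 {E1} => //; lia.
split; first by move: E1; rewrite m1; nia.
by rewrite E2 m1 mul1n addKn dvdn_mull.
Qed.

Lemma nat_span_column_pinned {u v k} :
  u.1 = 1 -> u.2 < k -> v.2 < k ->
  nat_span u v (1, k) -> nat_span u v (1, k.+1) -> v = (0, 1).
Proof.
move=> u1 lt_u2k lt_v2k span_k span_k1.
have [v1 dvd_k] := nat_span_column_dvd u1 lt_u2k lt_v2k span_k.
have [_ dvd_k1] := nat_span_column_dvd u1 (leqW lt_u2k) (leqW lt_v2k) span_k1.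
have : v.2 %| 1 by rewrite -(dvdn_addr 1 dvd_k) addn1 -subSn // ltnW.
by rewrite dvdn1 => /eqP v2; rewrite [v]surjective_pairing v1 v2.
Qed.

Lemma nat_span_column {u v k} :
  nat_span u v (1, k) -> nat_span u v (1, k.+1) ->
  u.1 + u.2 + v.1 + v.2 < k ->
  u.1 = 1 /\ v = (0, 1) \/ v.1 = 1 /\ u = (0, 1).
Proof.
move=> span_k span_k1 large.
have lt_u2k : u.2 < k by lia.
have lt_v2k : v.2 < k by lia.
case: (nat_span_unit_first span_k) => [u1|v1].
- by left; split; last exact: nat_span_column_pinned u1 lt_u2k lt_v2k span_k span_k1.
- right; split; first by [].
  by apply: nat_span_column_pinned v1 lt_v2k lt_u2k _ _; apply: nat_span_sym.
Qed.

Lemma nat_span_axis_lines {u v k} :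
  u.1 + u.2 + v.1 + v.2 < k ->
  nat_span u v (1, k) -> nat_span u v (1, k.+1) ->
  nat_span u v (k, 1) -> nat_span u v (k.+1, 1) ->
  u = (0, 1) /\ v = (1, 0) \/ u = (1, 0) /\ v = (0, 1).
Proof.
case: u v => [u1 u2] [v1 v2] /= large span_1k span_1k1 span_k1 span_k11.
have large_swap : u2 + u1 + v2 + v1 < k by lia.
have := nat_span_column span_1k span_1k1 large.
have := nat_span_column (nat_span_swap span_k1) (nat_span_swap span_k11) large_swap.
rewrite /swap_pair /=.
by case=> [[? []]|[? []]] ? ? [[? []]|[? []]] ? ?; subst => //; [left | right].
Qed.

Theorem proposition9 (L : word -> Prop) (Sa Sb : nat * nat) :
  language L ->
  ~ ((Sa = (0, 1) /\ Sb = (1, 0)) \/ (Sa = (1, 0) /\ Sb = (0, 1))) ->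
  ~ finite_set (fun p => ~ image_S L Sa Sb p).
Proof.
move=> _ not_basis [s complement_in_s].
pose k := \sum_(q <- s) (q.1 + q.2) + (Sa.1 + Sa.2 + Sb.1 + Sb.2).+1.
have far_in_span p : k < p.1 + p.2 -> ~ ~ nat_span Sa Sb p.
  move=> far not_span.
  have p_in_s : p \in s.
    apply: complement_in_s => -[w [_ Sw]].
    by apply: not_span; rewrite -Sw; apply: Shom_nat_span.
  by move: far; rewrite /k (big_rem p p_in_s) /=; lia.
apply: (far_in_span (1, k)) => [|span_1k]; first by rewrite /=; lia.
apply: (far_in_span (1, k.+1)) => [|span_1k1]; first by rewrite /=; lia.
apply: (far_in_span (k, 1)) => [|span_k1]; first by rewrite /=; lia.
apply: (far_in_span (k.+1, 1)) => [|span_k11]; first by rewrite /=; lia.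
have large : Sa.1 + Sa.2 + Sb.1 + Sb.2 < k by rewrite /k; lia.
exact: not_basis (nat_span_axis_lines large span_1k span_1k1 span_k1 span_k11).
Qed.
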